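(* Let $C$ be an $[n,k,d]$ and $C'$ an $[n',k',d']$ linear code over $\mathbb{F}_q$, let $x \in C \times C'$, $y = x + e$, and perform the column decoding described in the context. Let $Z = \{ j \in [n'] : \alpha_j = 0\}$. If $2|I_E| < d'$, then for every row index $i \in [n]$, $$2\, w_{Z}(\hat{x}^i - x^i) + |Z| < d'.$$
   Context: The product code $C \times C'$ consists of the $n \times n'$ matrices over $\mathbb{F}_q$ all of whose columns lie in $C$ and all of whose rows lie in $C'$. For a matrix $b$, $b_j$ is its $j$-th column and $b^i$ its $i$-th row; $w(\cdot)$ is Hamming weight; for $v \in \mathbb{F}_q^{n'}$ and $E \subseteq [n']$, $w_E(v)$ is the number of $j \notin E$ with $v_j \ne 0$. Let $t = \lfloor (d-1)/2 \rfloor$. Each column $y_j$ is decoded by a bounded-distance decoder for $C$ returning the unique codeword within distance $t$ of $y_j$ if it exists, otherwise failing. On success with output $\hat{x}_j$ put $\alpha_j = (d - 2w(y_j - \hat{x}_j))/d$; on failure put $\hat{x}_j = y_j$ and $\alpha_j = 0$. $\hat{x}$ is the matrix with columns $\hat{x}_j$, and $I_E \subseteq [n']$ is the set of $j$ for which decoding failed or $\hat{x}_j \neq x_j$. *)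

From HB Require Import structures.
From mathcomp Require Import all_boot all_order all_algebra.
Set Implicit Arguments. Unset Strict Implicit. Unset Printing Implicit Defensive.
Import Order.TTheory GRing.Theory Num.Theory.

Section ProductCodes.
Variable F : finFieldType.

Definition wt (m : nat) (v : 'rV[F]_m) : nat := #|[set j : 'I_m | v ord0 j != 0%R]|.

Definition wt_out (m : nat) (E : {set 'I_m}) (v : 'rV[F]_m) : nat :=
  #|[set j : 'I_m | (j \notin E) && (v ord0 j != 0%R)]|.

Definition min_dist (m : nat) (C : {vspace 'rV[F]_m}) (d : nat) : Prop :=
  (exists2 c : 'rV[F]_m, c \in C & (c != 0%R) && (wt c == d)) /\
  (forall c : 'rV[F]_m, c \in C -> c != 0%R -> d <= wt c).

Definition lin_code (m k d : nat) (C : {vspace 'rV[F]_m}) : Prop :=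
  \dim C = k /\ min_dist C d.

Definition colv (n n' : nat) (b : 'M[F]_(n, n')) (j : 'I_n') : 'rV[F]_n :=
  \row_i b i j.
Definition rowv (n n' : nat) (b : 'M[F]_(n, n')) (i : 'I_n) : 'rV[F]_n' :=
  row i b.

Definition in_product (n n' : nat) (C : {vspace 'rV[F]_n}) (C' : {vspace 'rV[F]_n'})
  (b : 'M[F]_(n, n')) : Prop :=
  (forall j, colv b j \in C) /\ (forall i, rowv b i \in C').

Definition bdd_dec (n d : nat) (C : {vspace 'rV[F]_n}) (y : 'rV[F]_n)
  : option 'rV[F]_n :=
  [pick c : 'rV[F]_n | (c \in C) && (wt (y - c)%R <= (d.-1)./2)].

Definition xhat_col (n d : nat) (C : {vspace 'rV[F]_n}) (y : 'rV[F]_n) : 'rV[F]_n :=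
  if bdd_dec d C y is Some c then c else y.

Definition alpha (n d : nat) (C : {vspace 'rV[F]_n}) (y : 'rV[F]_n) : rat :=
  if bdd_dec d C y is Some c then
    ((d%:R - 2%:R * (wt (y - c)%R)%:R) / d%:R)%R
  else 0%R.

Definition xhat (n n' d : nat) (C : {vspace 'rV[F]_n}) (y : 'M[F]_(n, n'))
  : 'M[F]_(n, n') :=
  \matrix_(i, j) (xhat_col d C (colv y j)) ord0 i.

Definition I_E (n n' d : nat) (C : {vspace 'rV[F]_n}) (x y : 'M[F]_(n, n'))
  : {set 'I_n'} :=
  [set j | (bdd_dec d C (colv y j) == None) || (xhat_col d C (colv y j) != colv x j)].

Definition Zset (n n' d : nat) (C : {vspace 'rV[F]_n}) (y : 'M[F]_(n, n'))
  : {set 'I_n'} :=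
  [set j | alpha d C (colv y j) == 0%R].

End ProductCodes.

(* Decoding can only give alpha_j = 0 by failing, since a successful decoding
   within radius (d-1)/2 has alpha_j >= 1/d; hence Z is contained in I_E.
   A row of xhat - x can only be nonzero in columns of I_E, so outside Z its
   weight is at most |I_E \ Z|, and 2 |I_E \ Z| + |Z| <= 2 |I_E| < d'. *)
From HB Require Import structures.
From mathcomp Require Import all_boot all_order all_algebra.
From mathcomp Require Import zify.
Import GRing.Theory Num.Theory.

Set Implicit Arguments.
Unset Strict Implicit.

Section ColumnDecoding.
Variable F : finFieldType.

Lemma wt_gt0 (m : nat) (v : 'rV[F]_m) : v != 0%R -> 0 < wt v.
Proof.
move=> v_neq0; rewrite lt0n cards_eq0; apply: contra v_neq0 => /eqP supp0.
apply/eqP/rowP => j; rewrite mxE.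
by apply/eqP; have := in_set0 j; rewrite -supp0 inE => /negbFE.
Qed.

Lemma min_dist_gt0 (m d : nat) (C : {vspace 'rV[F]_m}) : min_dist C d -> 0 < d.
Proof. by case=> [[c _ /andP[c_neq0 /eqP <-]] _]; exact: wt_gt0. Qed.

Lemma alpha_eq0 (n d : nat) (C : {vspace 'rV[F]_n}) (y : 'rV[F]_n) :
  0 < d -> (alpha d C y == 0%R) = (bdd_dec d C y == None).
Proof.
move=> d_gt0; rewrite /alpha /bdd_dec; case: pickP => [c /andP[_ wt_le] | _] //; apply/negbTE.
rewrite mulf_eq0 invr_eq0 pnatr_eq0 (gtn_eqF d_gt0) orbF subr_eq0 -natrM eqr_nat.
by apply: contraTneq wt_le => d_eq; move: d_gt0; rewrite d_eq; lia.
Qed.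

Lemma Zset_subset_I_E (n n' d : nat) (C : {vspace 'rV[F]_n}) (x y : 'M[F]_(n, n')) :
  0 < d -> Zset d C y \subset I_E d C x y.
Proof. by move=> d_gt0; apply/subsetP => j; rewrite !inE alpha_eq0 // => ->. Qed.

Lemma colv_xhat (n n' d : nat) (C : {vspace 'rV[F]_n}) (y : 'M[F]_(n, n')) j :
  colv (xhat d C y) j = xhat_col d C (colv y j).
Proof. by apply/rowP => i; rewrite !mxE (ord1 ord0). Qed.

Lemma xhat_miscorrected_subset_I_E (n n' d : nat) (C : {vspace 'rV[F]_n})
    (x y : 'M[F]_(n, n')) :
  [set j | colv (xhat d C y) j != colv x j] \subset I_E d C x y.
Proof. by apply/subsetP => j; rewrite !inE colv_xhat => ->; rewrite orbT. Qed.

Lemma wt_out_row_sub (m n : nat) (E : {set 'I_n}) (a b : 'M[F]_(m, n)) (i : 'I_m) :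
  wt_out E (rowv a i - rowv b i)%R <= #|[set j | colv a j != colv b j] :\: E|.
Proof.
apply/subset_leq_card/subsetP => j; rewrite !inE => /andP[-> ab_ij] /=.
apply: contra ab_ij => /eqP/rowP/(_ i).
by rewrite !mxE subr_eq0 => ->.
Qed.

End ColumnDecoding.

Theorem mainTheorem4 (F : finFieldType) (n k d n' k' d' : nat)
  (C : {vspace 'rV[F]_n}) (C' : {vspace 'rV[F]_n'})
  (HC : lin_code k d C) (HC' : lin_code k' d' C')
  (x e : 'M[F]_(n, n')) (Hx : in_product C C' x) :
  let y := (x + e)%R in
  2 * #|I_E d C x y| < d' ->
  forall i : 'I_n,
    2 * wt_out (Zset d C y) (rowv (xhat d C y) i - rowv x i)%R + #|Zset d C y| < d'.
Proof.
move=> y; set Z := Zset d C y; set I := I_E d C x y => I_small i.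
have Z_sub_I : Z \subset I by exact/Zset_subset_I_E/min_dist_gt0/HC.2.
have wt_row : wt_out Z (rowv (xhat d C y) i - rowv x i)%R <= #|I :\: Z|.
  apply: leq_trans (wt_out_row_sub Z (xhat d C y) x i) _.
  exact/subset_leq_card/setSD/xhat_miscorrected_subset_I_E.
have := cardsID Z I; rewrite (setIidPr Z_sub_I); lia.
Qed.
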